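(* There is an absolute constant $C>0$ such that the following holds. Let $n\ge 2$ and let $T:\mathbb{C}\times S^1\to\mathbb{C}$ satisfy $\mathrm{Lip}(T_\theta-\mathrm{Id})<\frac{1}{8n}$ for every $\theta$. Then for all $j<\log n$ and all $k$, $|A_{j,k,T}|\le C\,4^{2n-k-2j}$, where $|A_{j,k,T}|$ denotes the cardinality of $A_{j,k,T}$.
   Context: Middle-half Cantor set: $\mathcal{C}_0=[0,1]$ and $\mathcal{C}_{n+1}$ is obtained from $\mathcal{C}_n$ by replacing each of its intervals by the first and last quarters of that interval; $\mathcal{K}_n:=\mathcal{C}_n\times\mathcal{C}_n$ is the union of $4^n$ squares (''Cantor squares'') of side $4^{-n}$. For $T:\mathbb{C}\times S^1\to\mathbb{C}$ write $T_\theta(z):=T(z,e^{i\theta})$. Work in the rotated coordinate system $(x,y)$ whose positive $x$-axis points in the direction making angle $\arctan(1/2)$ with the standard $x$-axis. For integers $j,k$, $A_{j,k}$ is the set of pairs $(Q,Q')$ of Cantor squares of $\mathcal{K}_n$ whose centers $q=(x_q,y_q)$, $q'=(x_{q'},y_{q'})$ satisfy $4^{-k-1}\le|y_q-y_{q'}|\le 4^{-k}$ and $4^{-j-1}\le\left|\frac{x_q-x_{q'}}{y_q-y_{q'}}\right|\le 4^{-j}$. $A_{j,k,T}$ is the set of pairs $(Q,Q')$ of Cantor squares such that for some $\theta$ the images $(T_\theta(Q),T_\theta(Q'))$ satisfy the same conditions, i.e. the images $T_\theta(q),T_\theta(q')$ of the centers satisfy the two displayed inequalities. *)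

From Stdlib Require Import Reals ZArith ClassicalEpsilon.
From mathcomp Require Import ssreflect ssrfun ssrbool eqtype ssrnat seq choice fintype finfun bigop finset.

Set Implicit Arguments.
Unset Strict Implicit.
Unset Printing Implicit Defensive.

(* Points of C are represented as pairs of reals (Re, Im). *)
Definition pt := (R * R)%type.

Definition padd (p q : pt) : pt := (fst p + fst q, snd p + snd q)%R.
Definition psub (p q : pt) : pt := (fst p - fst q, snd p - snd q)%R.
Definition pnorm (p : pt) : R := sqrt (fst p ^ 2 + snd p ^ 2)%R.

(* T : C x S^1 -> C ;  T_theta(z) := T(z, e^{i theta}) with e^{i theta} = (cos theta, sin theta). *)
Definition Tth (T : pt -> pt -> pt) (theta : R) (z : pt) : pt := T z (cos theta, sin theta).

Definition lip_lt (f : pt -> pt) (c : R) : Prop :=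
  exists L : R, (L < c)%R /\
    forall z w : pt, (pnorm (psub (f z) (f w)) <= L * pnorm (psub z w))%R.

(* A Cantor interval of C_n is coded by its digit string a in {0,3}^n
   (true = digit 3): its left endpoint is sum_{i<n} a_i * 4^{-(i+1)},
   its length is 4^{-n}. *)
Definition digits (n : nat) := {ffun 'I_n -> bool}.

Definition cantor_center (n : nat) (a : digits n) : R :=
  (\big[Rplus/0%R]_(i < n) ((if a i then 3 else 0) * / 4 ^ (i.+1))
   + / 2 * / 4 ^ n)%R.

Definition csquare (n : nat) := (digits n * digits n)%type.

Definition sq_center (n : nat) (Q : csquare n) : pt :=
  (cantor_center Q.1, cantor_center Q.2).

(* Rotated coordinates: positive x-axis in direction arctan(1/2),
   i.e. unit vector (2,1)/sqrt 5; y-axis unit vector (-1,2)/sqrt 5. *)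
Definition xrot (p : pt) : R := ((2 * fst p + snd p) / sqrt 5)%R.
Definition yrot (p : pt) : R := ((- fst p + 2 * snd p) / sqrt 5)%R.

Definition in_Ajk (j k : Z) (q q' : pt) : Prop :=
  (powerRZ 4 (- k - 1) <= Rabs (yrot q - yrot q') <= powerRZ 4 (- k))%R /\
  (powerRZ 4 (- j - 1) <= Rabs ((xrot q - xrot q') / (yrot q - yrot q'))
     <= powerRZ 4 (- j))%R.

Definition pbool (P : Prop) : bool :=
  if excluded_middle_informative P then true else false.

Definition AjkT (n : nat) (j k : Z) (T : pt -> pt -> pt) : {set csquare n * csquare n} :=
  [set PQ : csquare n * csquare n |
     pbool (exists theta : R,
              in_Ajk j k (Tth T theta (sq_center PQ.1)) (Tth T theta (sq_center PQ.2)))].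

From Stdlib Require Import Reals ZArith Lia Lra Psatz ClassicalEpsilon.
From mathcomp Require Import ssreflect ssrfun ssrbool eqtype ssrnat seq choice fintype finfun bigop finset div.
From mathcomp Require Import zify.

Set Implicit Arguments.
Unset Strict Implicit.
Unset Printing Implicit Defensive.

(* Code a Cantor square of [K_n] by the integer with base-4 digits [2 x_i + y_i], where
   [x_i, y_i] in {0,1} are the digits of its two coordinates.  Up to the factor
   [4^n sqrt 5 / 3], the rotated coordinates of the difference of two centres are the difference
   of these codes and the difference of the "dual" integers [2 y - x].  As [T_theta - Id] has
   small Lipschitz constant, the centres of a pair in [A_{j,k,T}] already satisfy the two
   conditions up to constants.  For [j < 0] this puts their codes within
   [m ~ 4^(n-k-j)] of each other, leaving at most [4^n * 2m] pairs.  For [0 <= j < log n] the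
   slope [4^-j] dominates the perturbation: the codes are within [m ~ 4^(n-k-j)] while the dual
   integers differ by about [4^(n-k)].  Codes sharing all but their last [r] digits have dual
   integers within [4^r], so for [4^r ~ 4^(n-k)] the two codes lie in different blocks of length
   [4^r] and both are within [m] of a block boundary: at most [4^(n-r) (2m)^2 ~ 4^(2n-k-2j)]
   pairs. *)

(** * Base-4 codes *)

Definition num4 (c : nat -> bool) (a : nat) : nat := \sum_(i < a) c i * 4 ^ i.

Lemma num4S c a : num4 c a.+1 = num4 c a + c a * 4 ^ a.
Proof. by rewrite /num4 big_ord_recr. Qed.

Lemma num4D c a b : num4 c (a + b) = num4 c a + 4 ^ a * num4 (fun i => c (a + i)) b.
Proof.
rewrite /num4 big_split_ord /= big_distrr /=; congr (_ + _).
by apply: eq_bigr => i _; rewrite expnD; lia.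
Qed.

Lemma num4_lt c a : 3 * num4 c a < 4 ^ a.
Proof.
elim: a => [|a IH]; first by rewrite /num4 big_ord0.
by rewrite num4S expnS; case: (c a) => /=; lia.
Qed.

Lemma divmod_uniq d x y x' y' :
  x < d -> x' < d -> x + y * d = x' + y' * d -> x = x' /\ y = y'.
Proof.
move=> xd x'd e; have d0 : 0 < d by lia.
have := congr1 (modn^~ d) e; have := congr1 (divn^~ d) e => /=.
rewrite !(addnC _ (_ * d)) !modnMDl !divnMDl // !modn_small // !divn_small //; lia.
Qed.

(* [2 * num4 c + num4 e] has base-4 digits [2 c_i + e_i], hence determines [c] and [e]. *)
Lemma num4_pair_inj c e c' e' a :
  2 * num4 c a + num4 e a = 2 * num4 c' a + num4 e' a ->
  num4 c a = num4 c' a /\ num4 e a = num4 e' a.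
Proof.
elim: a => [|a IH]; first by rewrite /num4 !big_ord0.
rewrite !num4S => h.
have := num4_lt c a; have := num4_lt e a; have := num4_lt c' a; have := num4_lt e' a.
move=> b1 b2 b3 b4.
have [/IH [-> ->] hd] : 2 * num4 c a + num4 e a = 2 * num4 c' a + num4 e' a /\
                        2 * c a + e a = 2 * c' a + e' a.
  by apply: (@divmod_uniq (4 ^ a)); lia.
by case: (c a) (e a) (c' a) (e' a) hd => [] [] [] [].
Qed.

Lemma num4_inj c c' a : num4 c a = num4 c' a -> forall i, i < a -> c i = c' i.
Proof.
elim: a => [|a IH] // h i; rewrite ltnS leq_eqVlt.
move: h; rewrite !num4S => h.
have := num4_lt c a; have := num4_lt c' a => b1 b2.
have [/IH eq_low eq_top] : num4 c a = num4 c' a /\ nat_of_bool (c a) = c' a.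
  by apply: (@divmod_uniq (4 ^ a)); lia.
by case/orP => [/eqP -> | /eq_low]; [case: (c a) (c' a) eq_top => [] [] |].
Qed.

Definition dual4 (c e : nat -> bool) (a : nat) : Z :=
  (2 * Z.of_nat (num4 e a) - Z.of_nat (num4 c a))%Z.

(* Agreement of the leading [a - r] digits of [2 * num4 c + num4 e] forces agreement of the
   leading digits of [c] and [e], so only the last [r] digits contribute to the dual difference. *)
Lemma dual4_close c e c' e' a r : r <= a ->
  (2 * num4 c a + num4 e a) %/ 4 ^ r = (2 * num4 c' a + num4 e' a) %/ 4 ^ r ->
  (Z.abs (dual4 c e a - dual4 c' e' a) < Z.of_nat (4 ^ r))%Z.
Proof.
move=> ra; rewrite /dual4 -(subnKC ra) !num4D.
have := num4_lt c r; have := num4_lt e r; have := num4_lt c' r; have := num4_lt e' r.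
move=> b1 b2 b3 b4; have p4 : 0 < 4 ^ r by rewrite expn_gt0.
have split_code x y u v : 2 * (x + 4 ^ r * u) + (y + 4 ^ r * v) = (2 * u + v) * 4 ^ r + (2 * x + y).
  by lia.
rewrite !split_code !divnMDl // !divn_small ?addn0; try lia.
by case/num4_pair_inj => -> ->; lia.
Qed.

(** * Counting close pairs of codes *)

Definition close (m x y : nat) : bool := [&& x != y, x <= y + m & y <= x + m].

Definition near_boundary (B m x : nat) : bool := (x %% B < m) || (B - m <= x %% B).

Lemma close_cross_near_boundary B m x y :
  close m x y -> x %/ B != y %/ B -> near_boundary B m x.
Proof.
move=> /and3P [_ xy yx] /eqP qxy; apply/negPn/negP; rewrite negb_or -!ltnNge => /andP [lo hi].
have B0 : 0 < B by lia.
have := divn_eq x B; have := divn_eq y B; have := ltn_mod x B; have := ltn_mod y B.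
rewrite B0 => ry rx ey ex.
case: (ltngtP (x %/ B) (y %/ B)) => // [lt | gt].
- have : (x %/ B).+1 * B <= y %/ B * B by rewrite leq_mul2r lt orbT.
  lia.
- have : (y %/ B).+1 * B <= x %/ B * B by rewrite leq_mul2r gt orbT.
  lia.
Qed.

Lemma count_near_boundary B m A :
  count (near_boundary B m) (iota 0 (A * B)) <= A * (2 * m).
Proof.
elim: A => [|A IH] //; rewrite mulSnr iotaD count_cat mulSnr leq_add //.
rewrite add0n -{1}(addn0 (A * B)) iotaDl count_map.
rewrite (@eq_in_count _ _ (fun y => (y < m) || (B - m <= y))); last first.
  by move=> y; rewrite mem_iota => /andP [_ yB] /=; rewrite /near_boundary modnMDl modn_small.
have -> : 2 * m = size (iota 0 m ++ iota (B - m) m) by rewrite size_cat !size_iota; lia.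
rewrite -size_filter; apply: uniq_leq_size; first exact/filter_uniq/iota_uniq.
by move=> y; rewrite mem_filter mem_cat !mem_iota; lia.
Qed.

Lemma card_le_size_codes (X : finType) (P : X -> nat) (A : {set X}) (r : seq nat) :
  injective P -> {in A, forall Q, P Q \in r} -> #|A| <= size r.
Proof.
move=> P_inj Pr; rewrite cardE -(size_map P); apply: uniq_leq_size.
  by rewrite map_inj_uniq // enum_uniq.
by move=> y /mapP [Q]; rewrite mem_enum => QA ->; apply: Pr.
Qed.

Lemma card_pairs (X : finType) (c : X -> X -> bool) :
  #|[set PQ : X * X | c PQ.1 PQ.2]| = \sum_(Q : X) #|[set Q' | c Q Q']|.
Proof.
rewrite -sum1_card (eq_bigr (fun Q => \sum_(Q' | c Q Q') 1)); last first.
  by move=> Q _; rewrite -sum1_card; apply: eq_bigl => Q'; rewrite inE.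
by rewrite pair_big_dep /=; apply: eq_bigl => PQ; rewrite inE.
Qed.

Section CloseCodes.
Variables (X : finType) (P : X -> nat) (N : nat).
Hypothesis P_inj : injective P.
Hypothesis P_lt : forall Q, P Q < N.

Lemma card_le_N : #|X| <= N.
Proof.
rewrite -cardsT -(size_iota 0 N).
by apply: (card_le_size_codes P_inj) => Q _; rewrite mem_iota add0n P_lt.
Qed.

Lemma card_close_fiber m x : #|[set Q' | close m x (P Q')]| <= 2 * m.
Proof.
have -> : 2 * m = size (iota (x - m) m ++ iota x.+1 m) by rewrite size_cat !size_iota; lia.
apply: (card_le_size_codes P_inj) => Q; rewrite inE mem_cat !mem_iota => /and3P [xQ ? ?].
apply/orP; case: (ltngtP (P Q) x) xQ => [lt|gt|->] // _; [left | right]; apply/andP; split => //; lia.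
Qed.

Lemma card_close_pairs m :
  #|[set PQ : X * X | close m (P PQ.1) (P PQ.2)]| <= N * (2 * m).
Proof.
rewrite (card_pairs (fun Q Q' => close m (P Q) (P Q'))).
apply: (@leq_trans (\sum_(Q : X) 2 * m)); first by apply: leq_sum => Q _; apply: card_close_fiber.
by rewrite sum_nat_const leq_mul2r card_le_N orbT.
Qed.

(* A pair of close codes lying in different blocks of length [B] has its first code within
   [m] of a block boundary; there are at most [A * 2m] such codes, each with at most [2m] partners. *)
Lemma card_close_cross_pairs m A B : N = A * B ->
  #|[set PQ : X * X | close m (P PQ.1) (P PQ.2) && (P PQ.1 %/ B != P PQ.2 %/ B)]|
    <= A * (2 * m) * (2 * m).
Proof.
move=> NAB.
rewrite (card_pairs (fun Q Q' => close m (P Q) (P Q') && (P Q %/ B != P Q' %/ B))).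
apply: (@leq_trans (\sum_(Q : X) near_boundary B m (P Q) * (2 * m))).
  apply: leq_sum => Q _; case nQ: (near_boundary B m (P Q)); rewrite ?mul1n ?mul0n.
    apply: leq_trans (card_close_fiber m (P Q)); apply: subset_leq_card.
    by apply/subsetP => Q'; rewrite !inE => /andP [].
  rewrite leqn0 cards_eq0; apply/eqP/setP => Q'; rewrite !inE.
  by apply/negbTE/negP => /andP [cl /(close_cross_near_boundary cl)]; rewrite nQ.
rewrite -big_distrl leq_mul2r /=; apply/orP; right.
have -> : \sum_Q near_boundary B m (P Q) = #|[set Q | near_boundary B m (P Q)]|.
  rewrite -sum1_card [RHS]big_mkcond /=.
  by apply: eq_bigr => Q _; rewrite inE; case: near_boundary.
apply: (leq_trans _ (count_near_boundary B m A)); rewrite -NAB -size_filter.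
by apply: (card_le_size_codes P_inj) => Q; rewrite inE mem_filter mem_iota P_lt => ->.
Qed.
End CloseCodes.

(** * Rotated coordinates *)

Section Rotation.
Local Open Scope R_scope.

Lemma sqrt5_gt0 : 0 < sqrt 5.
Proof. by apply: sqrt_lt_R0; lra. Qed.

Lemma pnorm_ge0 p : 0 <= pnorm p.
Proof. exact: sqrt_pos. Qed.

Lemma xrot_psub p q : xrot (psub p q) = xrot p - xrot q.
Proof. by rewrite /xrot /psub /=; field; apply: Rgt_not_eq; apply: sqrt5_gt0. Qed.

Lemma yrot_psub p q : yrot (psub p q) = yrot p - yrot q.
Proof. by rewrite /yrot /psub /=; field; apply: Rgt_not_eq; apply: sqrt5_gt0. Qed.

Lemma pnorm_rot p : pnorm p = sqrt (xrot p ^ 2 + yrot p ^ 2).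
Proof.
have s5 : sqrt 5 ^ 2 = 5 by rewrite /= Rmult_1_r sqrt_sqrt; lra.
have := sqrt5_gt0; rewrite /pnorm /xrot /yrot => s0; congr sqrt.
by rewrite !Rpow_mult_distr !pow_inv s5; field.
Qed.

Lemma Rabs_le_sqrt_sum_sq x y : Rabs x <= sqrt (x ^ 2 + y ^ 2).
Proof. by rewrite -sqrt_Rsqr_abs /Rsqr; apply: sqrt_le_1_alt; nra. Qed.

Lemma sqrt_sum_sq_le x y : sqrt (x ^ 2 + y ^ 2) <= Rabs x + Rabs y.
Proof.
have := Rabs_pos x; have := Rabs_pos y; move=> ax ay.
rewrite -(sqrt_square (Rabs x + Rabs y)); last lra.
apply: sqrt_le_1_alt; rewrite -(pow2_abs x) -(pow2_abs y); nra.
Qed.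

Lemma Rabs_xrot_le p : Rabs (xrot p) <= pnorm p.
Proof. by rewrite pnorm_rot; apply: Rabs_le_sqrt_sum_sq. Qed.

Lemma Rabs_yrot_le p : Rabs (yrot p) <= pnorm p.
Proof. by rewrite pnorm_rot Rplus_comm; apply: Rabs_le_sqrt_sum_sq. Qed.

Lemma pnorm_le_rot p : pnorm p <= Rabs (xrot p) + Rabs (yrot p).
Proof. by rewrite pnorm_rot; apply: sqrt_sum_sq_le. Qed.

Lemma sqrt5_bounds : 2 <= sqrt 5 <= 7 / 3.
Proof.
have := sqrt5_gt0; have := sqrt_sqrt 5; nra.
Qed.

Lemma psub_psubC (a b c e : pt) : psub (psub a b) (psub c e) = psub (psub a c) (psub b e).
Proof. by rewrite /psub /=; congr pair; ring. Qed.
End Rotation.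

Section Perturbation.
Local Open Scope R_scope.
Variables (d w : pt) (L B rho : R).
Hypothesis L_le : L <= / 16.
Hypothesis wd_le : pnorm (psub w d) <= L * pnorm d.
Hypothesis B_gt0 : 0 < B.
Hypothesis yrot_w : B / 4 <= Rabs (yrot w) <= B.
Hypothesis slope_w : Rabs (xrot w / yrot w) <= rho.

Lemma Rabs_xrot_slope : Rabs (xrot w) <= rho * B.
Proof.
have yw0 : yrot w <> 0 by move=> y0; move: yrot_w; rewrite y0 Rabs_R0; lra.
have -> : Rabs (xrot w) = Rabs (xrot w / yrot w) * Rabs (yrot w).
  by rewrite -Rabs_mult; congr Rabs; field.
by apply: Rmult_le_compat; try apply: Rabs_pos; lra.
Qed.

Lemma rot_perturb_le :
  Rabs (xrot w - xrot d) <= pnorm (psub w d) /\ Rabs (yrot w - yrot d) <= pnorm (psub w d).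
Proof. by rewrite -xrot_psub -yrot_psub; split; [apply: Rabs_xrot_le | apply: Rabs_yrot_le]. Qed.

Lemma perturb_pnorm_le : pnorm d <= 8 / 7 * (1 + rho) * B.
Proof.
have := pnorm_le_rot d; have := Rabs_xrot_slope; have [ex ey] := rot_perturb_le.
have := pnorm_ge0 d; have := pnorm_ge0 (psub w d).
by split_Rabs; nra.
Qed.

Lemma perturb_steep : rho <= 1 -> L <= rho / 8 ->
  Rabs (xrot d) <= 9 / 7 * rho * B /\ 3 / 28 * B <= Rabs (yrot d).
Proof.
move=> rho_le1 L_le_rho.
have rho0 : 0 <= rho by apply: Rle_trans slope_w; apply: Rabs_pos.
have D0 := pnorm_ge0 d.
have D_le : pnorm d <= 16 / 7 * B by have := perturb_pnorm_le; nra.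
have E_le1 : pnorm (psub w d) <= B / 7 by nra.
have E_le2 : pnorm (psub w d) <= 2 / 7 * rho * B by nra.
have := Rabs_xrot_slope; have [ex ey] := rot_perturb_le.
by split; split_Rabs; lra.
Qed.
End Perturbation.

Lemma natr_mul m p : INR (m * p) = (INR m * INR p)%R.
Proof. by rewrite mulnE mult_INR. Qed.

Lemma natr_add m p : INR (m + p) = (INR m + INR p)%R.
Proof. by rewrite addnE plus_INR. Qed.

Lemma natr_exp4 e : INR (4 ^ e) = (4 ^ e)%R.
Proof. by elim: e => [|e IH] //; rewrite expnS natr_mul IH /=; ring. Qed.

Lemma floor_nat (M : R) : (0 <= M)%R -> exists m : nat, (INR m <= M < INR m + 1)%R.
Proof.
move=> M0; have [up_gt up_le] := archimed M.
have up_pos : (0 < up M)%Z by apply: lt_IZR; lra.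
exists (Z.to_nat (up M - 1)); rewrite INR_IZR_INZ Z2Nat.id; last lia.
by rewrite minus_IZR; lra.
Qed.

Lemma close_of_dist m a b : a <> b -> (Rabs (INR a - INR b) < INR m + 1)%R -> close m a b.
Proof.
move=> ab; rewrite !INR_IZR_INZ -minus_IZR -abs_IZR -plus_IZR => /lt_IZR dist_lt.
by apply/and3P; split; [apply/eqP | |]; lia.
Qed.

Section Squares.
Variable n : nat.

(* Digits read from the last one, so that [a 0] is the most significant. *)
Definition rev_digits (a : digits n) (i : nat) : bool :=
  (i < n) && oapp (fun o : 'I_n => a o) false (insub (n.-1 - i)).

Lemma rev_digitsE (a : digits n) (i : 'I_n) : rev_digits a i = a (rev_ord i).
Proof.
rewrite /rev_digits ltn_ord /=.
have -> : n.-1 - i = rev_ord i by rewrite /=; have := ltn_ord i; lia.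
by rewrite valK.
Qed.

Definition digit_code (a : digits n) : nat := num4 (rev_digits a) n.

Lemma digit_code_inj : injective digit_code.
Proof.
move=> a b /num4_inj eq_ab; apply/ffunP => o.
by have := eq_ab _ (ltn_ord (rev_ord o)); rewrite !rev_digitsE rev_ordK.
Qed.

Lemma cantor_centerE (a : digits n) :
  cantor_center a = ((3 * INR (digit_code a) + / 2) / 4 ^ n)%R.
Proof.
have p4 e : (4 ^ e <> 0)%R by apply: pow_nonzero; lra.
rewrite /cantor_center /digit_code /num4 (reindex_inj rev_ord_inj) /=.
set s := \sum_(i < n) _.
have -> : \big[Rplus/0%R]_(i < n) ((if a i then 3 else 0) * / 4 ^ i.+1)%R = (3 * INR s / 4 ^ n)%R.
  apply: (big_ind2 (fun (u : R) (v : nat) => u = 3 * INR v / 4 ^ n)%R).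
  - by rewrite /=; field.
  - by move=> ? ? ? ? -> ->; rewrite natr_add; field.
  move=> i _; rewrite -[n - i.+1]/(nat_of_ord (rev_ord i)) rev_digitsE rev_ordK.
  have -> : (4 ^ n = 4 ^ i.+1 * 4 ^ rev_ord i)%R.
    by rewrite -pow_add; f_equal; rewrite /=; have := ltn_ord i; lia.
  rewrite natr_mul natr_exp4; case: (a i) => /=; field; split; apply: p4.
by field.
Qed.

(* In base 4 the digits of [sq_code Q] are [2 x_i + y_i] in {0,1,2,3}, where [x_i, y_i] in {0,1}
   are the digits of the two coordinates of [Q]. *)
Definition sq_code (Q : csquare n) : nat := 2 * digit_code Q.1 + digit_code Q.2.

Definition sq_dual (Q : csquare n) : Z := dual4 (rev_digits Q.1) (rev_digits Q.2) n.

Lemma sq_code_inj : injective sq_code.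
Proof.
move=> [a b] [a' b'] /num4_pair_inj [/digit_code_inj eq_a /digit_code_inj eq_b].
by move: eq_a eq_b => /= -> ->.
Qed.

Lemma sq_code_lt Q : sq_code Q < 4 ^ n.
Proof. by rewrite /sq_code /digit_code; have := num4_lt (rev_digits Q.1) n; have := num4_lt (rev_digits Q.2) n; lia. Qed.

Lemma sq_dual_close Q Q' r : r <= n -> sq_code Q %/ 4 ^ r = sq_code Q' %/ 4 ^ r ->
  (Rabs (IZR (sq_dual Q - sq_dual Q')) < 4 ^ r)%R.
Proof.
move=> r_le /(dual4_close r_le) /IZR_lt.
by rewrite abs_IZR -INR_IZR_INZ natr_exp4.
Qed.

Lemma sq_dual_dist_lt Q Q' : (Rabs (IZR (sq_dual Q - sq_dual Q')) < 4 ^ n)%R.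
Proof. by apply: sq_dual_close => //; rewrite !divn_small ?sq_code_lt. Qed.

Definition center_scale : R := (4 ^ n * sqrt 5 / 3)%R.

Lemma center_scale_gt0 : (0 < center_scale)%R.
Proof.
have := sqrt5_gt0; have : (0 < 4 ^ n)%R by apply: pow_lt; lra.
by rewrite /center_scale; nra.
Qed.

Lemma center_scale_bounds : (2 / 3 * 4 ^ n <= center_scale <= 7 / 9 * 4 ^ n)%R.
Proof.
have := sqrt5_bounds; have : (0 < 4 ^ n)%R by apply: pow_lt; lra.
by rewrite /center_scale; split; nra.
Qed.

Lemma Rabs_center_scaleM x : Rabs (center_scale * x) = (center_scale * Rabs x)%R.
Proof. by rewrite Rabs_mult Rabs_pos_eq //; apply: Rlt_le; apply: center_scale_gt0. Qed.

Lemma sq_code_sub Q Q' : (INR (sq_code Q) - INR (sq_code Q') =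
  center_scale * (xrot (sq_center Q) - xrot (sq_center Q')))%R.
Proof.
have := sqrt5_gt0.
have : (0 < 4 ^ n)%R by apply: pow_lt; lra.
rewrite /center_scale /sq_code !natr_add /xrot /sq_center /= !cantor_centerE.
by move=> ? ?; field; lra.
Qed.

Lemma sq_dual_sub Q Q' : (IZR (sq_dual Q - sq_dual Q') =
  center_scale * (yrot (sq_center Q) - yrot (sq_center Q')))%R.
Proof.
have := sqrt5_gt0.
have : (0 < 4 ^ n)%R by apply: pow_lt; lra.
rewrite /center_scale /sq_dual /dual4 !minus_IZR !mult_IZR -!INR_IZR_INZ /yrot /sq_center.
cbn [fst snd]; rewrite -!/(digit_code _) !cantor_centerE.
by move=> ? ?; field; lra.
Qed.
End Squares.

Section PowersOfFour.
Local Open Scope R_scope.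

Lemma powerRZ4_pred z : powerRZ 4 (z - 1) = powerRZ 4 z / 4.
Proof. by rewrite -Z.add_opp_r powerRZ_add /=; lra. Qed.

Lemma powerRZ4_ge1 z : (0 <= z)%Z -> 1 <= powerRZ 4 z.
Proof. by move=> z0; rewrite -(Z2Nat.id z z0) -pow_powerRZ; apply: pow_R1_Rle; lra. Qed.

Lemma powerRZ4_opp_le1 z : (0 <= z)%Z -> powerRZ 4 (- z) <= 1.
Proof.
move=> /powerRZ4_ge1 z_ge1; rewrite powerRZ_neg'.
by rewrite -Rinv_1; apply: Rinv_le_contravar; lra.
Qed.

Lemma powerRZ4_lt_of_log z x : 0 < x -> IZR z < ln x / ln 4 -> powerRZ 4 z < x.
Proof.
move=> x0 z_lt; have ln4 : 0 < ln 4 by rewrite -ln_1; apply: ln_increasing; lra.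
rewrite powerRZ_Rpower; last lra.
rewrite /Rpower -[X in _ < X](exp_ln x) //; apply: exp_increasing.
by move/(Rmult_lt_compat_r _ _ _ ln4): z_lt; rewrite /Rdiv Rmult_assoc Rinv_l; lra.
Qed.

Lemma powerRZ4_decomp (n : nat) j k :
  powerRZ 4 (2 * Z.of_nat n - k - 2 * j) =
  4 ^ n * 4 ^ n * powerRZ 4 (- k) * powerRZ 4 (- j) ^ 2.
Proof.
have -> : (2 * Z.of_nat n - k - 2 * j = Z.of_nat n + Z.of_nat n + - k + (- j + - j))%Z by lia.
by rewrite !powerRZ_add ?pow_powerRZ /=; try lra; ring.
Qed.

Lemma exists_pow4_bracket (x : R) e : x < 4 ^ e ->
  exists r, (r <= e)%N /\ (r = 0%N \/ 4 ^ r <= x) /\ x < 4 ^ r.+1.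
Proof.
elim: e => [|e IH] x_lt.
  by exists 0%N; split => //; split; [left | rewrite /=; lra].
case: (Rlt_le_dec x (4 ^ e)) => [/IH [r [re rest]] | x_ge].
  by exists r; split => //; apply: leqW.
by exists e; split => //; split; [right |].
Qed.
End PowersOfFour.

(** * Counting [A_{j,k,T}] *)

Lemma pboolP (P : Prop) : reflect P (pbool P).
Proof. by rewrite /pbool; case: excluded_middle_informative => h; constructor. Qed.

Section PairsOfAjkT.
Local Open Scope R_scope.
Variables (n : nat) (T : pt -> pt -> pt) (j k : Z) (l : R).
Hypothesis T_lip : forall theta, lip_lt (fun z => psub (Tth T theta z) z) l.
Hypothesis l_le : l <= / 16.

Let B := powerRZ 4 (- k).
Let rho := powerRZ 4 (- j).

Lemma AjkT_neq PQ : PQ \in AjkT n j k T -> PQ.1 <> PQ.2.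
Proof.
rewrite inE => /pboolP [theta [[lo _] _]] eq12; move: lo; rewrite eq12 Rminus_diag Rabs_R0.
by have := powerRZ_lt 4 (- k - 1); lra.
Qed.

Lemma AjkT_perturbed PQ : PQ \in AjkT n j k T ->
  let d := psub (sq_center PQ.1) (sq_center PQ.2) in
  exists (w : pt) (L : R), L <= / 16 /\ L < l /\ pnorm (psub w d) <= L * pnorm d /\
    B / 4 <= Rabs (yrot w) <= B /\ Rabs (xrot w / yrot w) <= rho.
Proof.
rewrite inE => /pboolP [theta [[lo hi] slope]] d.
have [L [Ll lip]] := T_lip theta.
set q := sq_center PQ.1 in d lo hi slope *; set q' := sq_center PQ.2 in d lo hi slope *.
exists (psub (Tth T theta q) (Tth T theta q')), L.
rewrite /d psub_psubC xrot_psub yrot_psub -powerRZ4_pred.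
repeat split; try lra; [exact: lip | exact: hi | exact: slope.2].
Qed.

Lemma B_gt0 : 0 < B.
Proof. by apply: powerRZ_lt; lra. Qed.

Lemma rho_gt0 : 0 < rho.
Proof. by apply: powerRZ_lt; lra. Qed.

Lemma AjkT_code_dist PQ : PQ \in AjkT n j k T ->
  Rabs (INR (sq_code PQ.1) - INR (sq_code PQ.2)) <= (1 + rho) * B * 4 ^ n.
Proof.
move=> /AjkT_perturbed [w [L [L16 [_ [wd [yw sw]]]]]].
have := perturb_pnorm_le L16 wd B_gt0 yw sw.
have := Rabs_xrot_le (psub (sq_center PQ.1) (sq_center PQ.2)); rewrite xrot_psub.
rewrite sq_code_sub Rabs_center_scaleM.
have [_ s_le] := center_scale_bounds n; have := center_scale_gt0 n.
have : 0 < 4 ^ n by apply: pow_lt; lra.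
have := rho_gt0; have := B_gt0; move=> B0 r0 p0 s0 X_le D_le.
apply: (Rle_trans _ (center_scale n * (8 / 7 * (1 + rho) * B))); first by apply: Rmult_le_compat_l; lra.
have : 0 < (1 + rho) * B by nra.
by nra.
Qed.

Lemma AjkT_code_steep PQ : PQ \in AjkT n j k T -> rho <= 1 -> l <= rho / 8 ->
  Rabs (INR (sq_code PQ.1) - INR (sq_code PQ.2)) <= rho * B * 4 ^ n /\
  B * 4 ^ n / 16 <= Rabs (IZR (sq_dual PQ.1 - sq_dual PQ.2)).
Proof.
move=> /AjkT_perturbed [w [L [L16 [Ll [wd [yw sw]]]]]] rho1 l_rho.
have [] := perturb_steep L16 wd B_gt0 yw sw rho1 (ltac:(lra) : L <= rho / 8).
rewrite xrot_psub yrot_psub sq_code_sub sq_dual_sub !Rabs_center_scaleM => X_le Y_ge.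
have [s_ge s_le] := center_scale_bounds n; have := center_scale_gt0 n.
have : 0 < 4 ^ n by apply: pow_lt; lra.
have := rho_gt0; have := B_gt0; move=> B0 r0 p0 s0.
split.
- apply: (Rle_trans _ (center_scale n * (9 / 7 * rho * B))); first by apply: Rmult_le_compat_l; lra.
  have : 0 < rho * B by nra.
  by nra.
- apply: (Rle_trans _ (center_scale n * (3 / 28 * B))); last by apply: Rmult_le_compat_l; lra.
  by nra.
Qed.

Lemma card_AjkT_wide : 1 <= rho -> INR #|AjkT n j k T| <= 256 * (4 ^ n * 4 ^ n * B * rho ^ 2).
Proof.
move=> rho_ge1.
have p0 : 0 < 4 ^ n by apply: pow_lt; lra.
have [m [m_le m_gt]] : exists m : nat, INR m <= (1 + rho) * B * 4 ^ n < INR m + 1.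
  by apply: floor_nat; have := B_gt0 => B0; repeat apply: Rmult_le_pos; lra.
have sub : AjkT n j k T \subset [set PQ | close m (sq_code PQ.1) (sq_code PQ.2)].
  apply/subsetP => PQ PQ_in; rewrite inE; apply: close_of_dist.
    by move/sq_code_inj; apply: AjkT_neq.
  by have := AjkT_code_dist PQ_in; lra.
have := card_close_pairs (@sq_code_inj n) (@sq_code_lt n) m.
move/(leq_trans (subset_leq_card sub))/leP/le_INR; rewrite !natr_mul natr_exp4 /=.
have B0 := B_gt0; have Bp0 : 0 < B * 4 ^ n by nra.
have rho_sq : 1 + rho <= 2 * rho ^ 2 by nra.
have m_le_sq : INR m <= 2 * rho ^ 2 * (B * 4 ^ n) by nra.
move/Rle_trans; apply.
apply: (Rle_trans _ (4 ^ n * (2 * (2 * rho ^ 2 * (B * 4 ^ n))))).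
  by apply: Rmult_le_compat_l; rewrite /=; lra.
have : 0 < rho ^ 2 * (B * 4 ^ n) by apply: Rmult_lt_0_compat => //; apply: pow_lt; lra.
by rewrite /=; nra.
Qed.

Section Steep.
Hypotheses (rho_le1 : rho <= 1) (l_le_rho : l <= rho / 8).

(* Two squares whose images have steep slope are far apart in the dual direction, so their
   codes cannot share a block of length [4 ^ r] once [4 ^ r] is below that distance. *)
Lemma AjkT_sub_cross_pairs r m : (r <= n)%N -> (r = 0%N \/ 4 ^ r <= B * 4 ^ n / 16) ->
  rho * B * 4 ^ n < INR m + 1 ->
  AjkT n j k T \subset [set PQ | close m (sq_code PQ.1) (sq_code PQ.2) &&
                                 (sq_code PQ.1 %/ 4 ^ r != sq_code PQ.2 %/ 4 ^ r)].
Proof.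
move=> r_le r_small m_gt; apply/subsetP => PQ PQ_in; rewrite inE.
have [code_le dual_ge] := AjkT_code_steep PQ_in rho_le1 l_le_rho.
have code_neq : sq_code PQ.1 <> sq_code PQ.2 by move/sq_code_inj; apply: AjkT_neq.
rewrite close_of_dist //; last by lra.
case: r_small => [-> | pow_le]; first by rewrite expn0 !divn1; apply/eqP.
by apply/eqP => /(sq_dual_close r_le); lra.
Qed.

Lemma card_AjkT_steep : INR #|AjkT n j k T| <= 256 * (4 ^ n * 4 ^ n * B * rho ^ 2).
Proof.
have p0 : 0 < 4 ^ n by apply: pow_lt; lra.
have B0 := B_gt0; have r0 := rho_gt0.
have K0 : 0 < 4 ^ n * 4 ^ n * B * rho ^ 2.
  by repeat apply: Rmult_lt_0_compat => //=; lra.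
case: (set_0Vmem (AjkT n j k T)) => [-> | [PQ PQ_in]]; first by rewrite cards0 /=; lra.
have x_lt : B * 4 ^ n / 16 < 4 ^ n.
  have [_ dual_ge] := AjkT_code_steep PQ_in rho_le1 l_le_rho.
  by have := sq_dual_dist_lt PQ.1 PQ.2; lra.
have [r [r_le [r_small x_lt_r]]] := exists_pow4_bracket x_lt.
have [m [m_le m_gt]] : exists m : nat, INR m <= rho * B * 4 ^ n < INR m + 1.
  by apply: floor_nat; repeat apply: Rmult_le_pos; lra.
have split_n : (4 ^ n = 4 ^ (n - r) * 4 ^ r)%N by rewrite -expnD subnK.
have := card_close_cross_pairs (@sq_code_inj n) (@sq_code_lt n) m split_n.
move/(leq_trans (subset_leq_card (AjkT_sub_cross_pairs r_le r_small m_gt)))/leP/le_INR.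
rewrite !natr_mul !natr_exp4 => card_le; apply: (Rle_trans _ _ _ card_le).
have G0 : 0 < 4 ^ (n - r) by apply: pow_lt; lra.
have P0 : 0 < 4 ^ r by apply: pow_lt; lra.
have GP : 4 ^ (n - r) * 4 ^ r = 4 ^ n by rewrite -pow_add; f_equal; rewrite /=; lia.
have GB : 4 ^ (n - r) * B < 64.
  apply: (Rmult_lt_reg_r (4 ^ r)) => //.
  by rewrite /= in x_lt_r; rewrite (Rmult_comm _ B) Rmult_assoc GP; lra.
have m2 : INR m * INR m <= (rho * B * 4 ^ n) ^ 2 by have := pos_INR m; nra.
apply: (Rle_trans _ (4 * 4 ^ (n - r) * (rho * B * 4 ^ n) ^ 2)); first by rewrite /=; nra.
have -> : 4 * 4 ^ (n - r) * (rho * B * 4 ^ n) ^ 2 = 4 * (4 ^ (n - r) * B) * (4 ^ n * 4 ^ n * B * rho ^ 2).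
  by ring.
by nra.
Qed.
End Steep.
End PairsOfAjkT.

Theorem lemma4 :
  exists C : R, (0 < C)%R /\
    forall (n : nat) (T : pt -> pt -> pt),
      (2 <= n)%nat ->
      (forall theta : R, lip_lt (fun z => psub (Tth T theta z) z) (/ (8 * INR n))) ->
      forall j k : Z,
        (IZR j < ln (INR n) / ln 4)%R ->
        (INR #|AjkT n j k T| <= C * powerRZ 4 (2 * Z.of_nat n - k - 2 * j))%R.
Proof.
exists 256%R; split; first lra.
move=> n T n_ge2 T_lip j k j_lt; rewrite powerRZ4_decomp.
have n2 : (2 <= INR n)%R by apply: (le_INR 2); apply/leP.
have l_le : (/ (8 * INR n) <= / 16)%R by apply: Rinv_le_contravar; lra.
case: (Z_lt_le_dec j 0) => [j_neg | j_nneg].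
  by apply: card_AjkT_wide T_lip l_le _; apply: powerRZ4_ge1; lia.
apply: card_AjkT_steep T_lip l_le _ _; first exact: powerRZ4_opp_le1.
have := powerRZ4_lt_of_log (ltac:(lra) : (0 < INR n)%R) j_lt.
have := powerRZ4_ge1 j_nneg; rewrite powerRZ_neg' /Rdiv -Rinv_mult => p_ge1 p_lt.
by apply: Rinv_le_contravar; lra.
Qed.
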